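(* Let $W$ be an affine extended Coxeter group (notation as in the context) and let $D$ be a Weyl chamber. Then the submonoid $X_D:=\{x\in X:\rho(x)\in\overline D\}$ of $X$ is finitely generated as a monoid (here $\rho(x)$ denotes the translation vector by which $x$ acts).
   Context: An affine extended Coxeter group consists of a group $W$, a homomorphism $\rho:W\to\mathrm{Aut}_{\mathrm{aff}}(V)$ to the affine automorphism group of a finite-dimensional real vector space $V$, a locally finite set $\mathfrak H$ of affine hyperplanes in $V$, a connected component $C_0$ of $V\setminus\bigcup_{H\in\mathfrak H}H$, and elements $\widetilde s_H\in W$ ($H\in\mathfrak H$) such that: (ACI) $\rho(w)(H)\in\mathfrak H$ for all $w,H$; (ACII) $\rho(\widetilde s_H)$ is a reflection fixing $H$; (ACIII) the group $W_0:=\rho_0(W)$ of linear parts is finite; (ACIV) $0$ is a special point (every $H\in\mathfrak H$ is parallel to some $H'\in\mathfrak H$ with $0\in H'$); (ACV) the translations in $\rho(W)$ span $V/L$ as a real vector space, where $L=\bigcap_{H\in\mathfrak H,0\in H}H$; (ACVI) $w\widetilde s_Hw^{-1}=\widetilde s_{\rho(w)(H)}$; (ACVII) if $H_1,H_2$ are walls of $C_0$ (i.e. $H\cap\overline{C_0}$ has nonempty interior in $H$) and $\rho(\widetilde s_{H_1}\widetilde s_{H_2})$ has finite order $m$, then $(\widetilde s_{H_1}\widetilde s_{H_2})^m=1$; (ACVIII) $W_0$ is generated by the images of the $\widetilde s_H$; (ACIX) $0\in\overline{C_0}$; (ACX) $X:=\rho^{-1}(V)$ (elements acting by translations) is finitely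 generated and commutative. With $H_{\alpha,k}=\{v:\alpha(v)+k=0\}$, set $\Phi=\{\alpha\in V^\vee:\forall k\in\mathbb R,\ H_{\alpha,k}\in\mathfrak H\iff k\in\mathbb Z\}$; Weyl chambers are the connected components of $V\setminus\bigcup_{\alpha\in\Phi}\ker\alpha$. *)

From HB Require Import structures.
From mathcomp Require Import all_boot all_order all_algebra.
From mathcomp Require Import all_classical all_reals all_analysis.
Import numFieldNormedType.Exports.

Set Implicit Arguments.
Unset Strict Implicit.
Unset Printing Implicit Defensive.

Import Order.TTheory GRing.Theory Num.Theory.
Local Open Scope classical_set_scope.
Local Open Scope ring_scope.

(* The real vector space V is modelled as row vectors 'rV[R]_n over a real
   field R : realType (with its product topology); linear forms alpha in V^v
   are column vectors a : 'cV[R]_n, acting by v |-> (v *m a) 0 0.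
   The group W is an arbitrary (possibly infinite) groupType (boot/monoid.v).
   rho(w) is the affine map v |-> v *m lin w + tr w ; lin w is its linear
   part rho_0(w) and tr w its translation part. *)

Section AffineCoxeter.
Variables (R : realType) (n : nat).
Local Notation V := 'rV[R]_n.

Definition lform (a : 'cV[R]_n) (v : V) : R := (v *m a) 0 0.

Definition Hak (a : 'cV[R]_n) (k : R) : set V := [set v | lform a v + k = 0].

Definition is_affine_hyperplane (H : set V) : Prop :=
  exists (a : 'cV[R]_n) (k : R), a != 0 /\ H = Hak a k.

Definition aff_act (W : groupType) (lin : W -> 'M[R]_n) (tr : W -> V)
  (w : W) (v : V) : V := v *m lin w + tr w.

Definition locally_finite (Hs : set (set V)) : Prop :=
  forall v : V, exists U : set V, nbhs v U /\
    finite_set [set H | Hs H /\ (H `&` U) !=set0].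

Definition is_component (S C : set V) : Prop :=
  exists x, S x /\ C = connected_component S x.

Definition parallel (H H' : set V) : Prop :=
  exists t : V, H' = (fun v => v + t) @` H.

Definition is_wall (Hs : set (set V)) (C H : set V) : Prop :=
  Hs H /\ exists U : set V, open U /\ (U `&` H) !=set0 /\
    U `&` H `<=` H `&` closure C.

Definition is_reflection_fixing (f : V -> V) (H : set V) : Prop :=
  (forall v, f (f v) = v) /\ [set v | f v = v] = H.

Definition compl_union (Hs : set (set V)) : set V :=
  ~` \bigcup_(H in Hs) H.

Definition is_affine_ext_coxeter (W : groupType) (lin : W -> 'M[R]_n)
  (tr : W -> V) (Hs : set (set V)) (C0 : set V) (s : set V -> W) : Prop :=
  let act := aff_act lin tr in
  let L := \bigcap_(H in [set H | Hs H /\ H 0]) H in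
  let Xt := [set w : W | lin w = 1%:M] in
  (* rho : W -> Aut_aff(V) is a group homomorphism *)
   (forall w, lin w \in unitmx) /\
   (forall w1 w2 v, act (w1 * w2)%g v = act w1 (act w2 v)) /\
   (forall H, Hs H -> is_affine_hyperplane H) /\ locally_finite Hs /\
   is_component (compl_union Hs) C0 /\
   (forall w H, Hs H -> Hs (act w @` H)) /\
   (forall H, Hs H -> is_reflection_fixing (act (s H)) H) /\
   finite_set (range lin) /\
   (forall H, Hs H -> exists H', [/\ Hs H', H' 0 & parallel H H']) /\
   (forall v : V, exists l : V, L l /\
      exists c : seq (R * W), (forall p, p \in c -> Xt p.2) /\
        v = l + \sum_(p <- c) p.1 *: tr p.2) /\
   (forall w H, Hs H -> (w * s H * w^-1)%g = s (act w @` H)) /\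
   (forall H1 H2 (m : nat), is_wall Hs C0 H1 -> is_wall Hs C0 H2 ->
      (0 < m)%N ->
      (forall v, act ((s H1 * s H2) ^+ m)%g v = v) ->
      (forall k : nat, (0 < k < m)%N ->
         ~ (forall v, act ((s H1 * s H2) ^+ k)%g v = v)) ->
      ((s H1 * s H2) ^+ m)%g = 1%g) /\
   (* (ACVIII) : W_0 is generated by the rho_0(s_H) *)
   (forall w : W, exists ms : seq 'M[R]_n,
      (forall M, M \in ms -> exists H, Hs H /\
          (M = lin (s H) \/ M = invmx (lin (s H)))) /\
      lin w = foldr mulmx 1%:M ms) /\
   closure C0 0 /\
   (* (ACX) : X = rho^{-1}(V) is finitely generated and commutative *)
   (exists gs : seq W, (forall g, g \in gs -> Xt g) /\
      forall x, Xt x -> exists l : seq W,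
        (forall y, y \in l -> y \in gs \/ (y^-1)%g \in gs) /\
        x = foldr (fun a b => (a * b)%g) 1%g l) /\
   (forall x y, Xt x -> Xt y -> (x * y)%g = (y * x)%g).

Definition root_set (Hs : set (set V)) : set 'cV[R]_n :=
  [set a | forall k : R, Hs (Hak a k) <-> exists z : int, k = z%:~R].

Definition is_weyl_chamber (Hs : set (set V)) (D : set V) : Prop :=
  is_component (compl_union [set Hak a 0 | a in root_set Hs]) D.

Definition XD (W : groupType) (lin : W -> 'M[R]_n) (tr : W -> V)
  (D : set V) : set W :=
  [set x | lin x = 1%:M /\ closure D (tr x)].

Definition fg_monoid (W : groupType) (M : set W) : Prop :=
  exists gs : seq W, (forall g, g \in gs -> M g) /\
    forall x, M x -> exists l : seq W, (forall y, y \in l -> y \in gs) /\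
      x = foldr (fun a b => (a * b)%g) 1%g l.

End AffineCoxeter.

From HB Require Import structures.
From mathcomp Require Import all_boot all_order all_algebra.
From mathcomp Require Import all_classical all_reals all_analysis.
From mathcomp Require Import lra.
Set Implicit Arguments.
Unset Strict Implicit.
Unset Printing Implicit Defensive.
Import Order.TTheory GRing.Theory Num.Theory.
Import numFieldNormedType.Exports.
Local Open Scope classical_set_scope.

(* The translation subgroup X is commutative and generated by a finite list h
   (the given generators and their inverses), so every x in X is a monomial
   prod_i h_i^(u_i) with u in N^k, translating by sum_i u_i t_i.  Local
   finiteness at 0 leaves finitely many root hyperplanes ker a_1, ..., ker a_r
   through 0, and the closure of the Weyl chamber containing d is the cone
   {v | a_j(d) a_j(v) >= 0}.  Every root is integral on translation vectors,
   because H_{a,0} + t must again be some H_{a,k} with k in Z.  Hence x lies in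
   X_D exactly when u satisfies r linear inequalities with integer
   coefficients; by Gordan's lemma, derived here from Dickson's lemma, the
   lattice points of such a cone form a finitely generated monoid, and their
   monomials generate X_D. *)

Local Notation prodg l := (foldr (fun a b => (a * b)%g) 1%g l).

(* Vectors of N^K are functions nat -> nat vanishing from K on, compared by
   the pointwise order (<=)%O on functions. *)
Definition supported (K : nat) (f : nat -> nat) := forall i, (K <= i)%N -> f i = 0%N.

Definition set_coord (f : nat -> nat) (K t : nat) : nat -> nat :=
  fun i => if i == K then t else f i.

Definition covers (B : seq (nat -> nat)) (S : set (nat -> nat)) :=
  forall f, S f -> exists2 b, b \in B & (b <= f)%O.

Definition has_finite_basis (S : set (nat -> nat)) :=
  exists2 B, (forall b, b \in B -> S b) & covers B S.

Lemma set_coordK f K : set_coord f K (f K) = f.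
Proof. by apply/funext => i; rewrite /set_coord; case: eqP => // ->. Qed.

Lemma set_coord_ne f K t i : i != K -> set_coord f K t i = f i.
Proof. by rewrite /set_coord => /negbTE ->. Qed.

Lemma set_coord_idem f K s t : set_coord (set_coord f K s) K t = set_coord f K t.
Proof. by apply/funext => i; rewrite /set_coord; case: eqP. Qed.

Lemma le_set_coord b f K t : (b <= set_coord f K 0)%O -> (t <= f K)%N ->
  (set_coord b K t <= f)%O.
Proof.
move=> /lefP bf tf; apply/lefP => i; rewrite /set_coord; case: eqP => [->|/eqP iK] //.
by have := bf i; rewrite set_coord_ne.
Qed.

Lemma covers_cat B1 B2 S1 S2 :
  covers B1 S1 -> covers B2 S2 -> covers (B1 ++ B2) (S1 `|` S2).
Proof.
move=> cov1 cov2 f [/cov1|/cov2] [b bB bf]; exists b => //.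
  by rewrite mem_cat bB.
by rewrite mem_cat bB orbT.
Qed.

Lemma covers_sub B S1 S2 : S2 `<=` S1 -> covers B S1 -> covers B S2.
Proof. by move=> S21 cov f /S21 /cov. Qed.

(* Lifts of a finite basis of the projection forgetting coordinate K cover the
   elements with a large K-th coordinate; the finitely many remaining slices
   are covered by the induction hypothesis. *)
Section DicksonStep.
Variable K : nat.
Hypothesis dicksonK :
  forall S, (forall f, S f -> supported K f) -> has_finite_basis S.
Variable S : set (nat -> nat).
Hypothesis S_supp : forall f, S f -> supported K.+1 f.

Lemma set_coord0_supported f : S f -> supported K (set_coord f K 0).
Proof.
move=> Sf i; rewrite leq_eqVlt => /predU1P [<-|Ki]; first by rewrite /set_coord eqxx.
by rewrite set_coord_ne ?gtn_eqF // (S_supp Sf).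
Qed.

Lemma covers_slice t :
  exists2 B, (forall b, b \in B -> S b) & covers B (S `&` [set f | f K = t]).
Proof.
pose St := [set g | supported K g /\ S (set_coord g K t)].
have [B BS covB] : has_finite_basis St by apply: dicksonK => g [].
exists [seq set_coord b K t | b <- B]; first by move=> _ /mapP [b /BS [_ Sb] ->].
move=> f [Sf fK]; have [|b bB bf] := covB (set_coord f K 0).
  by split; [exact: set_coord0_supported | rewrite set_coord_idem -fK set_coordK].
by exists (set_coord b K t); [exact: map_f | apply: le_set_coord; rewrite ?fK].
Qed.

Lemma covers_below T :
  exists2 B, (forall b, b \in B -> S b) & covers B (S `&` [set f | (f K < T)%N]).
Proof.
elim: T => [|T [B1 B1S cov1]]; first by exists [::] => // f [].
have [B2 B2S cov2] := covers_slice T.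
exists (B1 ++ B2) => [b|]; first by rewrite mem_cat => /orP [/B1S|/B2S].
apply: covers_sub (covers_cat cov1 cov2) => f [Sf /=].
by rewrite ltnS leq_eqVlt => /predU1P [fK|fK]; [right|left].
Qed.

Lemma covers_above : exists T,
  exists2 B, (forall b, b \in B -> S b) & covers B (S `&` [set f | (T <= f K)%N]).
Proof.
pose S' := [set g | supported K g /\ exists t, S (set_coord g K t)].
have [B BS' covB] : has_finite_basis S' by apply: dicksonK => g [].
have [lift liftS] : {lift : (nat -> nat) -> nat &
    forall b, b \in B -> S (set_coord b K (lift b))}.
  apply: (choice (P := fun b t => b \in B -> S (set_coord b K t))) => b.
  have [/BS' [_ [t St]]|_] := boolP (b \in B); first by exists t.
  by exists 0%N.
exists (\max_(b <- B) lift b), [seq set_coord b K (lift b) | b <- B].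
  by move=> _ /mapP [b /liftS Sb ->].
move=> f [Sf fK]; have [|b bB bf] := covB (set_coord f K 0).
  split; first exact: set_coord0_supported.
  by exists (f K); rewrite set_coord_idem set_coordK.
exists (set_coord b K (lift b)); first exact: map_f.
apply: le_set_coord bf _; apply: leq_trans fK.
exact: (leq_bigmax_seq (F := lift) _ bB).
Qed.

End DicksonStep.

Lemma dickson K S : (forall f, S f -> supported K f) -> has_finite_basis S.
Proof.
elim: K S => [|K IH] S S_supp.
  have [[f Sf]|noS] := pselect (exists f, S f); last first.
    by exists [::] => // f Sf; case: noS; exists f.
  exists [:: f] => [b|g Sg]; first by rewrite inE => /eqP ->.
  by exists f; rewrite ?inE //; apply/lefP => i; rewrite (S_supp _ Sf).
have [T [B1 B1S cov1]] := covers_above IH S_supp.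
have [B2 B2S cov2] := covers_below IH S_supp T.
exists (B1 ++ B2) => [b|]; first by rewrite mem_cat => /orP [/B1S|/B2S].
apply: covers_sub (covers_cat cov1 cov2) => f Sf.
by case: (leqP T (f K)) => fK; [left|right].
Qed.

Definition generated_by (G : seq (nat -> nat)) (u : nat -> nat) :=
  exists2 l, {subset l <= G} & forall i, u i = (\sum_(b <- l) b i)%N.

Lemma generated_by_cons G b u :
  b \in G -> generated_by G (fun i => u i - b i)%N -> (b <= u)%O -> generated_by G u.
Proof.
move=> bG [l lG ul] /lefP bu; exists (b :: l) => [g|i].
  by rewrite inE => /predU1P [->|/lG].
by rewrite big_cons -ul subnKC.
Qed.

Lemma subtractive_generated K (P : set (nat -> nat)) :
  (forall w, P w -> supported K w) ->
  (forall w b, P w -> P b -> (b <= w)%O -> P (fun i => w i - b i)%N) ->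
  exists2 B, (forall b, b \in B -> P b) & forall w, P w -> generated_by B w.
Proof.
move=> P_supp P_sub.
pose Q := [set w | P w /\ exists i, w i <> 0%N].
have [B BQ covB] : has_finite_basis Q by apply: (dickson (K := K)) => w [/P_supp].
exists B => [b /BQ []//|w].
have [N] := ubnP (\sum_(i < K) w i); elim: N w => // N IH w wN Pw.
have [[i wi]|w0] := pselect (exists i, w i <> 0%N); last first.
  by exists [::] => // i; rewrite big_nil; apply: contra_notP w0 => wi; exists i.
have [b bB bw] := covB w (conj Pw (ex_intro _ i wi)).
have [Pb [j bj]] := BQ b bB.
have jK : (j < K)%N by rewrite ltnNge; apply: contra_notN bj => /(P_supp _ Pb).
have sum_lt : (\sum_(i < K) (w i - b i) < N)%N.
  rewrite -ltnS; apply: leq_trans wN; rewrite ltnS.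
  have -> : (\sum_(i < K) w i = \sum_(i < K) b i + \sum_(i < K) (w i - b i))%N.
    by rewrite -big_split; apply: eq_bigr => k _ /=; rewrite subnKC //; move/lefP: bw.
  rewrite -[X in (X < _)%N]add0n ltn_add2r (bigD1 (Ordinal jK)) //=.
  by rewrite ltn_addr // lt0n; apply/eqP.
exact: generated_by_cons bB (IH _ sum_lt (P_sub _ _ Pw Pb bw)) bw.
Qed.

Definition lincomb (k : nat) (c : nat -> int) (u : nat -> nat) : int :=
  (\sum_(i < k) Posz (u i) * c i)%R.

Definition cone_points (k r : nat) (c : nat -> nat -> int) : set (nat -> nat) :=
  [set u | supported k u /\ forall j, (j < r)%N -> (0 <= lincomb k (c j) u)%R].

Definition truncate (k : nat) (f : nat -> nat) : nat -> nat :=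
  fun i => if (i < k)%N then f i else 0%N.

Lemma lincomb_eq k c u v : (forall i, (i < k)%N -> u i = v i) ->
  lincomb k c u = lincomb k c v.
Proof. by move=> uv; apply: eq_bigr => i _; rewrite uv. Qed.

Lemma lincomb_truncate k c u : lincomb k c (truncate k u) = lincomb k c u.
Proof. by apply: lincomb_eq => i ik; rewrite /truncate ik. Qed.

Lemma gordan k r c : exists2 G, (forall g, g \in G -> cone_points k r c g) &
  forall u, cone_points k r c u -> generated_by G u.
Proof.
(* Slack coordinates w (k + j) = c_j . u turn the inequalities into
   equations, so the lifted set is closed under subtraction. *)
pose P := [set w | supported (k + r) w /\
  forall j, (j < r)%N -> Posz (w (k + j)%N) = lincomb k (c j) w].
have [||B BP genB] := subtractive_generated (K := k + r) (P := P).
- by move=> w [].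
- move=> w b [w_supp wc] [b_supp bc] /lefP bw; split=> [i ki|j jr].
    by rewrite w_supp.
  rewrite -subzn // wc // bc // /lincomb -sumrB.
  by apply: eq_bigr => i _; rewrite -subzn // mulrBl.
exists [seq truncate k b | b <- B].
  move=> _ /mapP [b /BP [_ bc] ->]; split=> [i ki|j jr].
    by rewrite /truncate ltnNge ki.
  by rewrite lincomb_truncate -bc.
move=> u [u_supp uc].
pose w i := if (i < k)%N then u i
  else if (i < k + r)%N then `|lincomb k (c (i - k)%N) u|%N else 0%N.
have Pw : P w.
  split=> [i kri|j jr].
    by rewrite /w ltnNge (leq_trans (leq_addr r k) kri) ltnNge kri.
  rewrite /w ltnNge leq_addr ltn_add2l jr addKn (@lincomb_eq _ _ w u).
    by rewrite gez0_abs // uc.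
  by move=> i ik; rewrite /w ik.
have [l lB wl] := genB w Pw.
exists [seq truncate k b | b <- l] => [_ /mapP [b bl ->]|i]; first exact/map_f/lB.
rewrite big_map /truncate; case: ltnP => ik.
  by rewrite -wl /w ik.
by rewrite u_supp // big1.
Qed.

Section Monomials.
Variables (G : groupType) (h : seq G).
Hypothesis h_comm : forall i j, commute (nth 1%g h i) (nth 1%g h j).

Definition prod_pows (s : seq nat) (u : nat -> nat) : G :=
  foldr (fun i x => nth 1 h i ^+ u i * x)%g 1%g s.

Definition monomial (u : nat -> nat) : G := prod_pows (iota 0 (size h)) u.

Lemma commute_prod_pows x s u :
  (forall i, commute x (nth 1%g h i)) -> commute x (prod_pows s u).
Proof.
move=> xh; elim: s => [|i s IH] /=; first exact: commute1.
by apply: commuteM => //; apply: commuteX.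
Qed.

Lemma prod_powsD s u v :
  prod_pows s (fun i => u i + v i)%N = (prod_pows s u * prod_pows s v)%g.
Proof.
elim: s => [|i s IH] /=; first by rewrite mulg1.
rewrite IH expgnDr -!mulgA; congr (_ * _)%g; rewrite !mulgA; congr (_ * _)%g.
by apply: commute_prod_pows => j; apply/commute_sym/commuteX/commute_sym.
Qed.

Lemma prod_pows0 s : prod_pows s (fun=> 0%N) = 1%g.
Proof. by elim: s => [|i s IH] //=; rewrite IH mulg1. Qed.

Lemma prod_pows_delta s i : uniq s ->
  prod_pows s (fun j => (j == i) : nat) = if i \in s then nth 1%g h i else 1%g.
Proof.
elim: s => [|j s IH] //= /andP [js us]; rewrite IH // in_cons.
by case: (eqVneq j i) => [<-|ji] /=; rewrite ?(negbTE js) ?mulg1 ?mul1g.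
Qed.

Lemma monomial_sum l u : (forall i, u i = \sum_(b <- l) b i)%N ->
  monomial u = prodg [seq monomial b | b <- l].
Proof.
elim: l u => [|b l IH] u ul /=.
  rewrite -(prod_pows0 (iota 0 (size h))); congr prod_pows.
  by apply/funext => i; rewrite ul big_nil.
rewrite -(IH (fun i => \sum_(b <- l) b i)%N) // /monomial -prod_powsD.
by congr prod_pows; apply/funext => i; rewrite ul big_cons.
Qed.

Lemma word_monomial l : {subset l <= h} ->
  exists2 u, supported (size h) u & prodg l = monomial u.
Proof.
elim: l => [|y l IH] lh /=.
  by exists (fun=> 0%N) => //; rewrite /monomial prod_pows0.
have [|u u_supp ->] := IH; first by move=> z zl; apply: lh; rewrite in_cons zl orbT.
have yh : y \in h by apply: lh; rewrite in_cons eqxx.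
exists (fun j => (j == index y h) + u j)%N.
  move=> j hj; rewrite u_supp // addn0; case: eqP => // jy.
  by move: hj; rewrite jy leqNgt index_mem yh.
rewrite /monomial prod_powsD prod_pows_delta ?iota_uniq // mem_iota add0n.
by rewrite index_mem yh nth_index.
Qed.

Lemma fg_monoid_cone_image (M : set G) r c :
  (forall u, cone_points (size h) r c u -> M (monomial u)) ->
  (forall x, M x -> exists2 u, cone_points (size h) r c u & x = monomial u) ->
  fg_monoid M.
Proof.
move=> M_cone cone_M; have [gens gens_cone cone_gens] := gordan (size h) r c.
exists [seq monomial g | g <- gens]; split=> [_ /mapP [g /gens_cone Cg ->]|x].
  exact: M_cone.
move=> /cone_M [u /cone_gens [l lG ul] ->]; exists [seq monomial b | b <- l].
split=> [_ /mapP [b /lG bG ->]|]; [exact: map_f | exact: monomial_sum].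
Qed.

End Monomials.

Local Open Scope ring_scope.

Section AffineAction.
Variables (R : realType) (n : nat) (W : groupType).
Variables (lin : W -> 'M[R]_n) (tr : W -> 'rV[R]_n).
Hypothesis lin_unit : forall w, lin w \in unitmx.
Hypothesis aff_actM : forall w1 w2 v,
  aff_act lin tr (w1 * w2)%g v = aff_act lin tr w1 (aff_act lin tr w2 v).

Lemma trM w1 w2 : tr (w1 * w2)%g = tr w2 *m lin w1 + tr w1.
Proof. by have := aff_actM w1 w2 0; rewrite /aff_act !mul0mx !add0r. Qed.

Lemma linM w1 w2 : lin (w1 * w2)%g = lin w2 *m lin w1.
Proof.
apply/row_matrixP => i; rewrite !rowE.
have := aff_actM w1 w2 (delta_mx 0 i); rewrite /aff_act trM mulmxDl -mulmxA addrA.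
by move/addIr/addIr.
Qed.

Lemma lin1 : lin 1%g = 1%:M.
Proof.
have lin11 := linM 1%g 1%g; rewrite mulg1 in lin11.
by rewrite -[LHS]mul1mx -(mulVmx (lin_unit 1%g)) -mulmxA -lin11.
Qed.

Lemma tr1 : tr 1%g = 0.
Proof.
have := trM 1%g 1%g; rewrite mulg1 lin1 mulmx1 => tr11.
by apply: (addrI (tr 1%g)); rewrite addr0 -tr11.
Qed.

Definition is_translation (x : W) := lin x = 1%:M.

Lemma is_translation1 : is_translation 1%g.
Proof. exact: lin1. Qed.

Lemma is_translationM x y :
  is_translation x -> is_translation y -> is_translation (x * y)%g.
Proof. by rewrite /is_translation linM => -> ->; rewrite mulmx1. Qed.

Lemma is_translationV x : is_translation x -> is_translation (x^-1)%g.
Proof.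
by rewrite /is_translation => x1; have := linM x x^-1; rewrite mulgV lin1 x1 mulmx1.
Qed.

Lemma tr_translationM x y : is_translation x -> tr (x * y)%g = tr x + tr y.
Proof. by rewrite trM => ->; rewrite mulmx1 addrC. Qed.

Lemma is_translationX x m : is_translation x -> is_translation (x ^+ m)%g.
Proof.
move=> x1; elim: m => [|m IH]; first exact: is_translation1.
by rewrite expgS; apply: is_translationM.
Qed.

Lemma tr_translationX x m : is_translation x -> tr (x ^+ m)%g = m%:R *: tr x.
Proof.
move=> x1; elim: m => [|m IH]; first by rewrite expg0 tr1 scale0r.
by rewrite expgS tr_translationM // IH mulrS scalerDl scale1r.
Qed.

Section TranslationProducts.
Variable h : seq W.
Hypothesis h_translation : forall i, is_translation (nth 1%g h i).

Lemma is_translation_prod_pows s u : is_translation (prod_pows h s u).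
Proof.
elim: s => [|i s IH] /=; first exact: is_translation1.
exact/is_translationM/IH/is_translationX.
Qed.

Lemma tr_prod_pows s u :
  tr (prod_pows h s u) = \sum_(i <- s) (u i)%:R *: tr (nth 1%g h i).
Proof.
elim: s => [|i s IH]; first by rewrite big_nil tr1.
rewrite big_cons -IH -tr_translationX // -tr_translationM //.
exact: is_translationX.
Qed.

End TranslationProducts.
End AffineAction.

Section LinearForms.
Variables (R : realType) (n : nat).

Lemma lform_is_linear (a : 'cV[R]_n) : linear_for *%R (lform a).
Proof. by move=> c u v; rewrite /lform mulmxDl -scalemxAl !mxE. Qed.

HB.instance Definition _ (a : 'cV[R]_n) :=
  GRing.isLinear.Build R 'rV[R]_n R *%R (lform a) (lform_is_linear a).

Lemma lformZl (c : R) (a : 'cV[R]_n) v : lform (c *: a) v = c * lform a v.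
Proof. by rewrite /lform -scalemxAr mxE. Qed.

Lemma lform_continuous (a : 'cV[R]_n) : continuous (lform a).
Proof.
have -> : lform a = fun v => \sum_j v 0 j * a j 0.
  by apply/funext => v; rewrite /lform mxE.
apply: continuous_big => [|j _ v]; first exact: add_continuous.
by apply: continuousM; [exact: coord_continuous | exact: cst_continuous].
Qed.

Lemma line_continuous (p q : 'rV[R]_n) : continuous (fun t : R => p + t *: q).
Proof. by move=> t; apply: cvgD; [exact: cvg_cst | exact: scalel_continuous]. Qed.

Definition regular_points (als : seq 'cV[R]_n) : set 'rV[R]_n :=
  [set v | forall a, a \in als -> lform a v != 0].

Section PositiveChamber.
Variables (als : seq 'cV[R]_n) (d : 'rV[R]_n).
Hypothesis als_pos : forall a, a \in als -> 0 < lform a d.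
Local Notation C := (connected_component (regular_points als) d).

Lemma component_pos a p : a \in als -> C p -> 0 < lform a p.
Proof.
move=> aals Cp.
suff CE : C = C `&` [set v | 0 < lform a v] by move: Cp; rewrite CE => -[].
symmetry; apply: component_connected.
- exists d; split; last exact: als_pos.
  by apply: connected_component_refl => b /als_pos; rewrite lt0r => /andP [].
- exists (lform a @^-1` [set x | 0 < x]) => //.
  by apply: open_comp => [x _|]; [exact: lform_continuous | exact: open_gt].
- exists (lform a @^-1` [set x | 0 <= x]).
    apply: preimage_closed => [x _|]; [apply: lform_continuous | exact: closed_ge].
  apply/seteqP; split=> v [Cv av]; split=> //=; first exact: ltW.
  by rewrite lt0r av andbT; apply: (connected_component_sub Cv).
Qed.

Lemma pos_sub_component v : (forall a, a \in als -> 0 < lform a v) -> C v.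
Proof.
move=> v_pos; pose seg t := d + t *: (v - d).
have seg_pos t a : 0 <= t <= 1 -> a \in als -> 0 < lform a (seg t).
  move=> /andP [t0 t1] aals; have := als_pos aals; have := v_pos a aals.
  rewrite /seg linearD linearZ linearB /=.
  by case: (leP (lform a d) (lform a v)); nra.
have seg_cont : continuous seg by exact: line_continuous.
apply: (connected_component_max (B := seg @` `[0, 1])).
- by exists 0; [rewrite /= in_itv /= lexx ler01 | rewrite /seg scale0r addr0].
- move=> _ [t + <-] a aals; rewrite /= in_itv /= => t01.
  by rewrite gt_eqF //; apply: seg_pos aals.
- apply: connected_continuous_connected; first exact: segment_connected.
  exact: continuous_subspaceT.
- by exists 1; [rewrite /= in_itv /= lexx ler01 | rewrite /seg scale1r addrC subrK].
Qed.

Lemma closure_component v : closure C v <-> forall a, a \in als -> 0 <= lform a v.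
Proof.
split=> [Cv a aals|v_nneg].
  have half_closed : closed (lform a @^-1` [set x | 0 <= x]).
    apply: preimage_closed => [x _|]; [apply: lform_continuous | exact: closed_ge].
  suff : closure C `<=` lform a @^-1` [set x | 0 <= x] by apply.
  rewrite ((closure_id _).1 half_closed); apply: closureS => p.
  by move=> /(component_pos aals) /ltW.
move=> B vB; pose f t := v + t *: d.
have /nbhs_ballP [e e0 eB] : nbhs (0 : R) (f @^-1` B).
  by apply: line_continuous; rewrite scale0r addr0.
have e2_gt0 : 0 < e / 2 by rewrite divr_gt0.
exists (f (e / 2)); split; last first.
  apply: eB; rewrite /ball /= sub0r normrN gtr0_norm //.
  by rewrite ltr_pdivrMr // ltr_pMr // ltr1n.
apply: pos_sub_component => a aals; rewrite /f linearD linearZ /=.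
by have := v_nneg a aals; have := als_pos aals; nra.
Qed.

End PositiveChamber.

Lemma closure_component_sign als d v : regular_points als d ->
  closure (connected_component (regular_points als) d) v <->
  forall a, a \in als -> 0 <= lform a d * lform a v.
Proof.
(* Rescaling each a by a(d) makes all forms positive at d. *)
move=> d_reg; pose als' := [seq lform a d *: a | a <- als].
have reg' : regular_points als' = regular_points als.
  apply/seteqP; split=> w w_reg a aals.
    have := w_reg _ (map_f (fun a => lform a d *: a) aals).
    by rewrite lformZl mulf_eq0 negb_or => /andP [].
  by move: aals => /mapP [b bals ->]; rewrite lformZl mulf_neq0 ?d_reg ?w_reg.
have pos' a : a \in als' -> 0 < lform a d.
  move=> /mapP [b bals ->]; rewrite lformZl -expr2 lt_def sqrf_eq0 d_reg //.
  exact: sqr_ge0.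
rewrite -reg' closure_component //; split=> nneg a aals.
  by rewrite -lformZl; apply: nneg; exact: map_f.
by move: aals => /mapP [b bals ->]; rewrite lformZl; exact: nneg.
Qed.

End LinearForms.

Lemma ge0_mul_intr_sgz (R : realDomainType) (x : R) (z : int) :
  (0 <= x * z%:~R) = (0 <= sgz x * z).
Proof. by rewrite -sgz_ge0 sgzM sgz_int -[RHS]sgz_ge0 sgzM sgz_id. Qed.

Lemma finite_representatives (A B : eqType) (P : set A) (f : A -> B) (L : seq B) :
  exists2 s : seq A, (forall a, a \in s -> P a) &
    forall b, P b -> f b \in L -> exists2 a, a \in s & f b = f a.
Proof.
elim: L => [|y L [s sP s_rep]]; first by exists [::].
have [[a0 [Pa0 <-]]|no_rep] := pselect (exists a, P a /\ f a = y).
  exists (a0 :: s) => [a|b Pb]; first by rewrite inE => /predU1P [->|/sP].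
  rewrite inE => /predU1P [->|/(s_rep _ Pb) [a as_ ->]].
    by exists a0; rewrite ?inE ?eqxx.
  by exists a; rewrite // inE as_ orbT.
exists s => // b Pb; rewrite inE => /predU1P [fb|]; last exact: s_rep.
by case: no_rep; exists b.
Qed.

Section Roots.
Variables (R : realType) (n : nat).

Lemma Hak0P (a : 'cV[R]_n) v : Hak a 0 v <-> lform a v = 0.
Proof. by rewrite /Hak /= addr0. Qed.

Lemma root_kernels_finite (Hs : set (set 'rV[R]_n)) : locally_finite Hs ->
  exists2 als : seq 'cV[R]_n, (forall a, a \in als -> root_set Hs a) &
    compl_union [set Hak a 0 | a in root_set Hs] = regular_points als.
Proof.
move=> Hs_fin; have [U [U0 U_fin]] := Hs_fin 0.
have [L LE] := (finite_seqP _).1 U_fin.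
have [als als_roots als_rep] :=
  finite_representatives (root_set Hs) (fun a => Hak a 0) L.
have root_Hs a : root_set Hs a -> Hs (Hak a 0) by move=> /(_ 0) [_]; apply; exists 0.
exists als => //; apply/seteqP; split=> v.
  move=> v_off a aals; apply/eqP => av; apply: v_off.
  by exists (Hak a 0); [exists a => //; exact: als_roots | exact/Hak0P].
move=> v_reg [_ [b b_root <-]]; have [|a aals ->] := als_rep b b_root.
  suff : [set H | Hs H /\ (H `&` U) !=set0] (Hak b 0) by rewrite LE.
  split; first exact: root_Hs.
  by exists 0; split; [apply/Hak0P; exact: linear0 | exact: nbhs_singleton].
by move/Hak0P; apply/eqP/v_reg.
Qed.

Lemma translation_image_Hak (W : groupType) (lin : W -> 'M[R]_n) tr x a k :
  is_translation lin x ->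
  aff_act lin tr x @` Hak a k = Hak a (k - lform a (tr x)).
Proof.
move=> x1; apply/seteqP; split=> [_ [v av <-]|w aw].
  by rewrite /Hak /= /aff_act x1 mulmx1 linearD addrACA subrr addr0.
exists (w - tr x); last by rewrite /aff_act x1 mulmx1 subrK.
by move: aw; rewrite /Hak /= linearB; lra.
Qed.

Lemma root_lform_tr_int (W : groupType) (lin : W -> 'M[R]_n) tr Hs a x :
  root_set Hs a -> is_translation lin x ->
  Hs (aff_act lin tr x @` Hak a 0) -> lform a (tr x) \is a Num.int.
Proof.
move=> a_root x1; rewrite translation_image_Hak // sub0r => /(a_root _).1 [z zE].
by rewrite -[lform _ _]opprK zE rpredN intr_int.
Qed.

End Roots.

Section ChamberMonoid.
Variables (R : realType) (n : nat) (W : groupType).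
Variables (lin : W -> 'M[R]_n) (tr : W -> 'rV[R]_n).
Hypothesis lin_unit : forall w, lin w \in unitmx.
Hypothesis aff_actM : forall w1 w2 v,
  aff_act lin tr (w1 * w2)%g v = aff_act lin tr w1 (aff_act lin tr w2 v).
Variables (h : seq W) (als : seq 'cV[R]_n) (d : 'rV[R]_n) (D : set 'rV[R]_n).
Hypothesis h_translation : forall i, is_translation lin (nth 1%g h i).
Hypothesis h_comm : forall i j, commute (nth 1%g h i) (nth 1%g h j).
Hypothesis translation_word :
  forall x, is_translation lin x -> exists2 l, {subset l <= h} & x = prodg l.
Hypothesis als_int :
  forall a i, a \in als -> lform a (tr (nth 1%g h i)) \is a Num.int.
Hypothesis closureD :
  forall v, closure D v <-> forall a, a \in als -> 0 <= lform a d * lform a v.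

Let coef a i := Num.floor (lform a (tr (nth 1%g h i))).

(* The sign of a_j(d) turns 0 <= a_j(d) a_j(tr x) into an integral inequality. *)
Let cone_coef j i := sgz (lform (nth 0 als j) d) * coef (nth 0 als j) i.

Lemma lform_tr_monomial a u : a \in als ->
  lform a (tr (monomial h u)) = (lincomb (size h) (coef a) u)%:~R.
Proof.
move=> aals; rewrite (tr_prod_pows lin_unit aff_actM h_translation).
have -> : iota 0 (size h) = index_iota 0 (size h) by rewrite /index_iota subn0.
rewrite linear_sum big_mkord rmorph_sum.
by apply: eq_bigr => i _; rewrite linearZ /= rmorphM /= floorK ?als_int //.
Qed.

Lemma XD_monomial u : XD lin tr D (monomial h u) <->
  forall j, (j < size als)%N -> 0 <= lincomb (size h) (cone_coef j) u.
Proof.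
have lincomb_sgz j : lincomb (size h) (cone_coef j) u =
    sgz (lform (nth 0 als j) d) * lincomb (size h) (coef (nth 0 als j)) u.
  by rewrite /lincomb mulr_sumr; apply: eq_bigr => i _; rewrite mulrCA.
split=> [[_ /closureD monD] j j_als|cone_u].
  rewrite lincomb_sgz -ge0_mul_intr_sgz -lform_tr_monomial ?mem_nth //.
  by rewrite monD ?mem_nth.
split; first exact: (is_translation_prod_pows lin_unit aff_actM h_translation).
apply/closureD => a aals; rewrite lform_tr_monomial // ge0_mul_intr_sgz.
by rewrite -(nth_index 0 aals) -lincomb_sgz cone_u // index_mem.
Qed.

Lemma XD_fg_monoid : fg_monoid (XD lin tr D).
Proof.
apply: (fg_monoid_cone_image h_comm (r := size als) (c := cone_coef)).
  by move=> u [_ cone_u]; apply/XD_monomial.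
move=> x XDx; have [l lh xl] := translation_word XDx.1.
have [u u_supp xu] := word_monomial h_comm lh.
exists u; last by rewrite xl.
by split=> //; apply/XD_monomial; rewrite -xu -xl.
Qed.

End ChamberMonoid.

Theorem lemma3p3p11 (R : realType) (n : nat) (W : groupType)
  (lin : W -> 'M[R]_n) (tr : W -> 'rV[R]_n) (Hs : set (set 'rV[R]_n))
  (C0 : set 'rV[R]_n) (s : set 'rV[R]_n -> W) (D : set 'rV[R]_n) :
  is_affine_ext_coxeter lin tr Hs C0 s ->
  is_weyl_chamber Hs D ->
  fg_monoid (XD lin tr D).
Proof.
move=> [lin_unit [aff_actM [_ [Hs_fin [_ [ACI [_ [_ [_ [_ [_ [_ [_ [_ ACX]]]]]]]]]]]]]].
move: ACX => [[gs [gs_trans gs_gen]] X_comm] [d [d_reg ->]].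
have [als als_roots alsE] := root_kernels_finite Hs_fin; rewrite alsE in d_reg *.
pose h := gs ++ [seq (g^-1)%g | g <- gs].
have h_trans i : is_translation lin (nth 1%g h i).
  have [ih|hi] := ltnP i (size h); last first.
    by rewrite nth_default //; exact: is_translation1.
  move: (mem_nth 1%g ih); rewrite mem_cat => /orP [/gs_trans //|].
  by move=> /mapP [g /gs_trans g1 ->]; exact: is_translationV.
apply: (XD_fg_monoid lin_unit aff_actM (h := h) (als := als) (d := d)) => //.
- by move=> i j; apply: X_comm; apply: h_trans.
- move=> x /gs_gen [l [l_gs ->]]; exists l => // y /l_gs [yg|yg].
    by rewrite mem_cat yg.
  by rewrite mem_cat; apply/orP; right; apply/mapP; exists y^-1%g; rewrite ?invgK.
- move=> a i /als_roots a_root.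
  have Hs_a : Hs (Hak a 0) by apply/(a_root 0); exists 0.
  exact: root_lform_tr_int a_root (h_trans i) (ACI _ _ Hs_a).
- by move=> v; exact: closure_component_sign.
Qed.
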